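(* Let $L(t)=(l_{ij}(t))_{i,j=1}^m$ satisfy Assumption A4 and $\sigma>0$. Suppose there exist $\delta>0$ and $T>0$ such that for every interval $I=[t_1,t_1+T]\subset[0,\infty)$ the graph $G(I,\delta)$ has a spanning tree. Then there exist $\delta_1>0$ and $T_1>0$ such that $\eta(V(t_0+T_1,t_0))>\delta_1$ for all $t_0\ge0$.
   Context: Assumption A4: (a) $l_{ij}(t)\ge0$ for $i\neq j$ are measurable and $l_{ii}(t)=-\sum_{j\ne i}l_{ij}(t)$; (b) there is $M_1>0$ with $|l_{ij}(t)|\le M_1$ for all $i,j,t$. $V(t,t_0)$ is the solution matrix (identity at $t_0$) of $\dot u=\sigma L(t)u$, $u\in\mathbb R^m$ (it is a stochastic matrix). For a stochastic matrix $V=(v_{ij})$ with rows $v_i$, $\eta(V)=\min_{i,j}\sum_{k=1}^m\min\{v_{ik},v_{jk}\}$; $V$ is called $\delta_1$-scrambling if $\eta(V)>\delta_1$. For a compact interval $I=[t_1,t_2]$ and $\delta>0$, $G(I,\delta)$ is the directed graph on $\{1,\dots,m\}$ with an edge from $j$ to $i$ iff $\int_{t_1}^{t_2}l_{ij}(\tau)d\tau>\delta$. A directed graph has a spanning tree if some vertex reaches every other vertex along directed edges. *)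

From HB Require Import structures.
From mathcomp Require Import all_boot all_order all_algebra.
From mathcomp Require Import all_classical all_reals all_analysis.
Set Implicit Arguments. Unset Strict Implicit. Unset Printing Implicit Defensive.
Import Order.TTheory GRing.Theory Num.Theory.
Local Open Scope classical_set_scope.
Local Open Scope ring_scope.

Definition assumptionA4 (R : realType) (m : nat) (L : R -> 'M[R]_m) : Prop :=
  (forall i j : 'I_m, measurable_fun setT (fun t => L t i j)) /\
  (forall t (i j : 'I_m), i != j -> 0 <= L t i j) /\
  (forall t (i : 'I_m), L t i i = - \sum_(j < m | j != i) L t i j) /\
  (exists M1 : R, 0 < M1 /\ forall t (i j : 'I_m), `|L t i j| <= M1).

(* V is the (Caratheodory) solution matrix of du/dt = sigma L(t) u with
   V(t0,t0) = I:  for t >= t0,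
   V(t,t0) = I + int_{t0}^{t} sigma L(s) V(s,t0) ds  (entrywise, with integrable
   integrand). *)
Definition solution_matrix (R : realType) (m : nat) (sigma : R)
  (L : R -> 'M[R]_m) (V : R -> R -> 'M[R]_m) : Prop :=
  forall t0 t : R, t0 <= t -> forall i j : 'I_m,
    (lebesgue_measure).-integrable `[t0, t]
       (fun s => (sigma * \sum_(k < m) L s i k * V s t0 k j)%:E) /\
    V t t0 i j = (i == j)%:R +
       Rintegral lebesgue_measure `[t0, t]
         (fun s => sigma * \sum_(k < m) L s i k * V s t0 k j).

(* eta(V) = min_{i,j} sum_k min(v_ik, v_jk).  The neutral element 1 of the
   iterated min is harmless for stochastic matrices (each such sum is <= 1). *)
Definition eta (R : realType) (m : nat) (V : 'M[R]_m) : R :=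
  \big[Num.min/1]_(i < m) \big[Num.min/1]_(j < m)
     \sum_(k < m) Num.min (V i k) (V j k).

Definition G_edge (R : realType) (m : nat) (L : R -> 'M[R]_m) (t1 t2 delta : R)
  : rel 'I_m :=
  fun j i => delta < Rintegral lebesgue_measure `[t1, t2] (fun s => L s i j).

Definition has_spanning_tree (m : nat) (e : rel 'I_m) : Prop :=
  exists r : 'I_m, forall i : 'I_m, connect e r i.

From mathcomp Require Import all_boot all_order all_algebra.
From mathcomp Require Import all_classical all_reals all_analysis.
From mathcomp Require Import ring lra zify measurable_realfun.
Import Order.TTheory GRing.Theory Num.Theory.
Local Open Scope classical_set_scope.
Local Open Scope ring_scope.

Set Implicit Arguments. Unset Strict Implicit. Unset Printing Implicit Defensive.

(* Write a := sigma L and fix a column r: u(t) := V(t, t0) e_r solves u' = a(t) u, where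
   |a| <= K := sigma M1 and a is nonnegative off the diagonal.  Comparing u with its
   explicit Euler scheme on finer and finer grids shows that u stays nonnegative and
   that, over a window [s, s + D] with 2 K D <= p,
     u_i(s + D) >= 2^-p (u_i(s) + c * int_s^(s+D) a_ij)   whenever u_j >= c on the window:
   the diagonal damps u_i by at most 2^-p, and the coupling a_ij feeds u_j into u_i.
   Cut time into windows [t0 + k T, t0 + (k+1) T] and let S_k(r) be the set of i with
   V_ir(t0 + k T) >= c^k, where beta = 2^-p and c = min(beta, beta^2 sigma delta).
   The sets S_k(r) grow with k, and an edge x -> y of the k-th graph G(I, delta) with
   x in S_k(r) puts y in S_(k+1)(r).  Following the spanning tree from its root r_k,
   the set S_k(r_k) grows strictly as long as it is not everything, so the total
   sum_r |S_k(r)| <= m^2 forces some column r to be full after m^2 windows; then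
   every pair of rows shares the column r with entries >= c^(m^2), bounding eta. *)

Section IntervalIntegral.
Variable R : realType.
Local Notation mu := (@lebesgue_measure R).
Local Notation integrable_on D f := (mu.-integrable D (EFin \o f)).

Lemma integrable_itv_bounded (a b B : R) (f : R -> R) :
  measurable_fun setT f -> (forall s, `|f s| <= B) -> integrable_on `[a, b] f.
Proof.
move=> mf fB; apply: measurable_bounded_integrable => //.
- by rewrite /= lebesgue_measure_itv; case: ifP => // _; exact: ltry.
- exact: measurable_funS mf.
- exists B; split; first exact: num_real.
  by move=> x Bx y _; apply: (le_trans (fB y)); rewrite ltW.
Qed.

Lemma integrable_itv_cst (a b c : R) : integrable_on `[a, b] (fun=> c).
Proof. exact: (@integrable_itv_bounded _ _ `|c|). Qed.

Lemma integrable_itvZl (a b c : R) f :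
  integrable_on `[a, b] f -> integrable_on `[a, b] (fun s => c * f s).
Proof.
move=> /(integrableZl _ c) h.
by apply: eq_integrable (h _) => // x _ /=; rewrite EFinM.
Qed.

Lemma integrable_itv_sum_Rintegral (a b : R) (I : Type) (s : seq I) (f : I -> R -> R) :
  (forall k, integrable_on `[a, b] (f k)) ->
  integrable_on `[a, b] (fun x => \sum_(k <- s) f k x) /\
  \int[mu]_(x in `[a, b]) (\sum_(k <- s) f k x) =
    \sum_(k <- s) \int[mu]_(x in `[a, b]) f k x.
Proof.
move=> hf; elim: s => [|k s [ih1 ih2]].
  have -> : (fun x => \sum_(k <- [::]) f k x) = fun=> 0.
    by apply/funext => x; rewrite big_nil.
  by rewrite big_nil /Rintegral integral0; split; first exact: integrable_itv_cst.
have -> : (fun x => \sum_(j <- k :: s) f j x) = fun x => f k x + \sum_(j <- s) f j x.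
  by apply/funext => x; rewrite big_cons.
by rewrite big_cons -ih2 RintegralD //; split; first exact: (integrableD _ (hf k) ih1).
Qed.

Lemma Rintegral_itv_split (a x b : R) f : a <= x -> x <= b ->
  integrable_on `[a, b] f ->
  \int[mu]_(s in `[a, b]) f s =
    \int[mu]_(s in `[a, x]) f s + \int[mu]_(s in `[x, b]) f s.
Proof.
move=> ax xb hf.
have := @Rintegral_itvB R f (BLeft a) (BRight b) x hf.
rewrite !bnd_simp => /(_ ax xb) h.
rewrite -(@Rintegral_itv_obnd_cbnd R x (BRight b) f); last first.
  by apply: integrableS hf => //; apply: subset_itv; rewrite bnd_simp.
by rewrite -h addrC subrK.
Qed.

Lemma Rintegral_itv_cst (a b c : R) : a <= b ->
  \int[mu]_(s in `[a, b]) c = c * (b - a).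
Proof.
move=> ab; rewrite Rintegral_cst // /= lebesgue_measure_itv /= lte_fin.
case: ltP => [_|ba] //=.
have -> : a = b by apply/le_anti; rewrite ab ba.
by rewrite subrr mulr0.
Qed.

Lemma Rintegral_itv_pt (a : R) f : \int[mu]_(s in `[a, a]) f s = 0.
Proof. by rewrite set_itv1 Rintegral_set1. Qed.

End IntervalIntegral.

Section Inequalities.
Variable R : realFieldType.

Lemma bernoulli_ineq (x : R) (q : nat) : 0 <= x -> x <= 1 ->
  1 - q%:R * x <= (1 - x) ^+ q.
Proof.
move=> x0 x1; elim: q => [|q ih]; first by rewrite expr0 mul0r subr0.
have h1 : (1 - x) * (1 - q%:R * x) <= (1 - x) ^+ q.+1.
  by rewrite exprS ler_wpM2l // subr_ge0.
have h2 : 0 <= q%:R * x * x by rewrite !mulr_ge0.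
rewrite -natr1 (le_trans _ h1) //.
have -> : (1 - x) * (1 - q%:R * x) = 1 - (q%:R + 1) * x + q%:R * x * x by ring.
lra.
Qed.

Lemma metzler_row_step_geN (m : nat) (i : 'I_m) (u x : 'I_m -> R) (e B : R) :
  0 <= e -> (forall k, - e <= u k) -> (forall k, k != i -> 0 <= x k) ->
  0 <= 1 + x i -> \sum_(k < m) x k <= B ->
  - (e * (1 + B)) <= u i + \sum_(k < m) u k * x k.
Proof.
move=> e0 ue x0 xi xB.
have h1 : - e * \sum_(k < m) x k <= \sum_(k < m | k != i) u k * x k + (- e) * x i.
  rewrite mulr_sumr (bigD1 i) //= addrC lerD2r.
  by apply: ler_sum => k ki; rewrite ler_wpM2r // x0.
have h2 : - e * (1 + x i) <= u i * (1 + x i) by rewrite ler_wpM2r.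
have h3 : - e * B <= - e * \sum_(k < m) x k by rewrite ler_wnM2l // oppr_le0.
rewrite (bigD1 i) //=.
have -> : u i + (u i * x i + \sum_(k < m | k != i) u k * x k) =
   u i * (1 + x i) + \sum_(k < m | k != i) u k * x k by ring.
lra.
Qed.

Lemma metzler_row_step_ge (m : nat) (i j : 'I_m) (u x : 'I_m -> R) (c w : R) :
  (forall k, 0 <= u k) -> (forall k, k != i -> 0 <= x k) -> w <= 1 + x i ->
  c = 0 \/ j != i -> c <= u j ->
  w * u i + c * x j <= u i + \sum_(k < m) u k * x k.
Proof.
move=> u0 x0 wx hc cu.
have h1 : w * u i <= u i * (1 + x i) by rewrite mulrC ler_wpM2l.
have h2 : c * x j <= \sum_(k < m | k != i) u k * x k.
  case: hc => [->|ji].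
    by rewrite mul0r sumr_ge0 // => k ki; rewrite mulr_ge0 // x0.
  rewrite (bigD1 j) //= (le_trans (ler_wpM2r (x0 _ ji) cu)) // lerDl.
  by rewrite sumr_ge0 // => k /andP[ki _]; rewrite mulr_ge0 // x0.
rewrite (bigD1 i) //=.
have -> : u i + (u i * x i + \sum_(k < m | k != i) u k * x k) =
   u i * (1 + x i) + \sum_(k < m | k != i) u k * x k by ring.
lra.
Qed.

End Inequalities.

Lemma le_of_le_subr_divn (R : archiFieldType) (B x y : R) (N0 : nat) : 0 <= B ->
  (forall n : nat, (N0 <= n)%N -> (0 < n)%N -> y - B / n%:R <= x) -> y <= x.
Proof.
move=> B0 h; rewrite leNgt; apply/negP => xy.
have yx0 : 0 < y - x by rewrite subr_gt0.
set n := maxn N0 (Num.Def.archi_bound (B / (y - x))).+1.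
have np : 0 < n%:R :> R by rewrite ltr0n /n leq_max ltn0Sn orbT.
have hn : B / (y - x) < n%:R.
  apply: (lt_le_trans (archi_boundP (divr_ge0 B0 (ltW yx0)))).
  by rewrite ler_nat /n leq_max leqnSn orbT.
have hB : B / n%:R < y - x by rewrite ltr_pdivrMr // mulrC -ltr_pdivrMr.
have := h n (leq_maxl _ _) (leq_trans (ltn0Sn _) (leq_maxr _ _)).
lra.
Qed.

Lemma grid_le (R : realDomainType) (s h : R) (j n : nat) : 0 <= h -> (j <= n)%N ->
  s + j%:R * h <= s + n%:R * h.
Proof. by move=> h0 jn; rewrite lerD2l ler_wpM2r // ler_nat. Qed.

Lemma grid_stepS (R : realDomainType) (s h : R) (j : nat) :
  s + j%:R * h + h = s + j.+1%:R * h.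
Proof. by rewrite -natr1 mulrDl mul1r addrA. Qed.

Section MetzlerODE.
Variables (R : realType) (m : nat) (a : R -> 'I_m -> 'I_m -> R) (u : R -> 'I_m -> R).
Variables (t0 K : R).
Local Notation mu := (@lebesgue_measure R).
Local Notation integrable_on D f := (mu.-integrable D (EFin \o f)).
Local Notation rhs i s := (\sum_(k < m) a s i k * u s k).

Hypothesis a_measurable : forall i k, measurable_fun setT (fun s => a s i k).
Hypothesis a_offdiag_ge0 : forall s i k, i != k -> 0 <= a s i k.
Hypothesis a_bounded : forall s i k, `|a s i k| <= K.
Hypothesis K_ge0 : 0 <= K.
Hypothesis u_solves : forall t, t0 <= t -> forall i,
  integrable_on `[t0, t] (fun s => rhs i s) /\
  u t i = u t0 i + \int[mu]_(s in `[t0, t]) rhs i s.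
Hypothesis u0_ge0 : forall k, 0 <= u t0 k.

Let coef_int tau h i k := \int[mu]_(s in `[tau, tau + h]) a s i k.
(* The error of one explicit Euler step of length h while |u| <= M: the coefficients
   are bounded by K and u is (m K M)-Lipschitz. *)
Let step_err M h := m%:R * K * (m%:R * (K * M)) * (h * h).

Lemma integrable_coef i k (x y : R) : integrable_on `[x, y] (fun s => a s i k).
Proof.
exact: integrable_itv_bounded _ _ (a_measurable i k) (fun s => a_bounded s i k).
Qed.

Lemma solution_increment i (tau t : R) : t0 <= tau -> tau <= t ->
  integrable_on `[tau, t] (fun s => rhs i s) /\
  u t i - u tau i = \int[mu]_(s in `[tau, t]) rhs i s.
Proof.
move=> h1 h2; have [I1 E1] := u_solves (le_trans h1 h2) i.
have [_ E2] := u_solves h1 i.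
split; first by apply: integrableS I1 => //; apply: subset_itv; rewrite bnd_simp.
by rewrite E1 E2 (Rintegral_itv_split h1 h2 I1); ring.
Qed.

Lemma solution_bounded (tE : R) : t0 <= tE -> exists M, 0 <= M /\
  forall s k, t0 <= s -> s <= tE -> `|u s k| <= M.
Proof.
move=> hE; pose A k := \int[mu]_(s in `[t0, tE]) `|rhs k s|.
have IA k : integrable_on `[t0, tE] (fun s => `|rhs k s|).
  by have [I _] := u_solves hE k; exact: integrable_norm.
have A0 k : 0 <= `|u t0 k| + A k by rewrite addr_ge0 // Rintegral_ge0.
exists (\sum_(k < m) (`|u t0 k| + A k)); split; first exact: sumr_ge0.
move=> s k h1 h2; have [I ->] := u_solves h1 k.
rewrite (bigD1 k) //=; apply: (le_trans (ler_normD _ _)); rewrite -addrA lerD2l.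
apply: (le_trans (le_normr_Rintegral _ _)) => //.
apply: ler_wpDr; first exact: sumr_ge0.
by rewrite /A (Rintegral_itv_split h1 h2 (IA k)) lerDl Rintegral_ge0.
Qed.

Section Bounded.
Variables (M tE : R).
Hypothesis u_le_M : forall s k, t0 <= s -> s <= tE -> `|u s k| <= M.

Lemma rhs_bounded s i : t0 <= s -> s <= tE -> `|rhs i s| <= m%:R * (K * M).
Proof.
move=> h1 h2; rewrite (le_trans (ler_norm_sum _ _ _)) //.
have -> : m%:R * (K * M) = \sum_(k < m) (K * M).
  by rewrite sumr_const card_ord mulr_natl.
apply: ler_sum => k _.
by rewrite normrM ler_pM // u_le_M.
Qed.

Lemma solution_lipschitz (tau s : R) k : t0 <= tau -> tau <= s -> s <= tE ->
  `|u s k - u tau k| <= m%:R * (K * M) * (s - tau).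
Proof.
move=> h1 h2 h3; have [I ->] := solution_increment k h1 h2.
apply: (le_trans (le_normr_Rintegral _ _)) => //.
rewrite -Rintegral_itv_cst //; apply: le_Rintegral => //.
- exact: integrable_norm.
- exact: integrable_itv_cst.
move=> x; rewrite /= in_itv /= => /andP[x1 x2].
by apply: rhs_bounded; [exact: le_trans x1 | exact: le_trans x2 h3].
Qed.

Hypothesis M_ge0 : 0 <= M.

Lemma rhs_ge_frozen (tau h x : R) i : t0 <= tau -> tau <= x -> x <= tau + h ->
  tau + h <= tE ->
  \sum_(k < m) u tau k * a x i k - m%:R * K * (m%:R * (K * M) * h) <= rhs i x.
Proof.
move=> h1 x1 x2 h2.
have -> : rhs i x = \sum_(k < m) u tau k * a x i k +
    \sum_(k < m) a x i k * (u x k - u tau k).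
  by rewrite -big_split /=; apply: eq_bigr => k _; ring.
have : `|\sum_(k < m) a x i k * (u x k - u tau k)| <= m%:R * K * (m%:R * (K * M) * h).
  rewrite (le_trans (ler_norm_sum _ _ _)) //.
  have -> : m%:R * K * (m%:R * (K * M) * h) = \sum_(k < m) (K * (m%:R * (K * M) * h)).
    by rewrite sumr_const card_ord mulr_natl mulrnAl.
  have Q0 : 0 <= m%:R * (K * M) by rewrite !mulr_ge0.
  apply: ler_sum => k _; rewrite normrM ler_pM //.
  apply: (le_trans (solution_lipschitz _ h1 x1 (le_trans x2 h2))).
  by apply: ler_wpM2l => //; rewrite lerBlDl.
move/lerNnormlW; lra.
Qed.

Lemma euler_lower_step (tau h : R) i : t0 <= tau -> 0 <= h -> tau + h <= tE ->
  u tau i + \sum_(k < m) u tau k * coef_int tau h i k - step_err M h <= u (tau + h) i.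
Proof.
move=> h1 h0 h2; have th : tau <= tau + h by rewrite lerDl.
set Q := m%:R * K * (m%:R * (K * M) * h).
have Ia k : integrable_on `[tau, tau + h] (fun x => u tau k * a x i k).
  exact/integrable_itvZl/integrable_coef.
have [IS ES] := integrable_itv_sum_Rintegral (index_enum 'I_m) Ia.
have [Ig Eg] := solution_increment i h1 th.
have le : \int[mu]_(x in `[tau, tau + h]) (\sum_(k < m) u tau k * a x i k - Q) <=
    \int[mu]_(x in `[tau, tau + h]) rhs i x.
  apply: le_Rintegral => //; first exact: (integrableB _ IS (integrable_itv_cst _ _ _)).
  by move=> x; rewrite /= in_itv /= => /andP[x1 x2]; exact: rhs_ge_frozen.
rewrite RintegralB // in le; last exact: integrable_itv_cst.
have hh : tau + h - tau = h by rewrite addrC addKr.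
rewrite ES Rintegral_itv_cst // hh in le.
have -> : \sum_(k < m) u tau k * coef_int tau h i k =
    \sum_(k < m) \int[mu]_(x in `[tau, tau + h]) (u tau k * a x i k).
  by apply: eq_bigr => k _; rewrite RintegralZl //; exact: integrable_coef.
rewrite /step_err /Q in le *; lra.
Qed.

End Bounded.

Lemma coef_int_bounds (tau h : R) i k : 0 <= h ->
  - (K * h) <= coef_int tau h i k <= K * h.
Proof.
move=> h0; have th : tau <= tau + h by rewrite lerDl.
have hc c : \int[mu]_(s in `[tau, tau + h]) c = c * h.
  by rewrite Rintegral_itv_cst // addrC addKr.
have [aL aU] : (forall x, - K <= a x i k) /\ (forall x, a x i k <= K).
  by split=> x; have := a_bounded x i k; rewrite ler_norml => /andP[].
apply/andP; split.
- rewrite -mulNr -hc; apply: le_Rintegral => //.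
  + exact: integrable_itv_cst.
  + exact: integrable_coef.
- rewrite -hc; apply: le_Rintegral => //.
  + exact: integrable_coef.
  + exact: integrable_itv_cst.
Qed.

Lemma coef_int_ge0 (tau h : R) i k : i != k -> 0 <= coef_int tau h i k.
Proof. by move=> ik; apply: Rintegral_ge0 => x _; exact: a_offdiag_ge0. Qed.

Lemma sum_coef_int_le (tau h : R) i : 0 <= h ->
  \sum_(k < m) coef_int tau h i k <= m%:R * K * h.
Proof.
move=> h0; have -> : m%:R * K * h = \sum_(k < m) (K * h).
  by rewrite sumr_const card_ord mulr_natl mulrnAl.
by apply: ler_sum => k _; have /andP[] := coef_int_bounds tau i k h0.
Qed.

Lemma solution_grid_geN (M tE h : R) (n : nat) :
  (forall s k, t0 <= s -> s <= tE -> `|u s k| <= M) -> 0 <= M ->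
  0 <= h -> K * h <= 1 -> t0 + n%:R * h <= tE ->
  forall l, (l <= n)%N -> forall k,
    - (l%:R * step_err M h * (1 + m%:R * K * h) ^+ l) <= u (t0 + l%:R * h) k.
Proof.
move=> hM M0 h0 Kh hn; set L := 1 + m%:R * K * h.
have L1 : 1 <= L by rewrite lerDl !mulr_ge0.
have E0 : 0 <= step_err M h by rewrite /step_err !mulr_ge0.
elim=> [_ k|l IH ln k]; first by rewrite !mul0r oppr0 addr0 u0_ge0.
set tau := t0 + l%:R * h.
have t1 : t0 <= tau by rewrite lerDl mulr_ge0.
have t2 : tau + h <= tE by rewrite grid_stepS (le_trans (grid_le _ h0 ln)).
rewrite -grid_stepS -/tau.
set e := l%:R * step_err M h * L ^+ l.
have e0 : 0 <= e by rewrite !mulr_ge0 // exprn_ge0 // (le_trans _ L1).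
have x0 : forall k', k' != k -> 0 <= coef_int tau h k k'.
  by move=> k'; rewrite eq_sym; exact: coef_int_ge0.
have xk : 0 <= 1 + coef_int tau h k k.
  by have /andP[+ _] := coef_int_bounds tau k k h0; lra.
have := metzler_row_step_geN e0 (IH (ltnW ln)) x0 xk (sum_coef_int_le tau k h0).
have := euler_lower_step hM M0 k t1 h0 t2.
have eL : e * (1 + m%:R * K * h) = l%:R * step_err M h * L ^+ l.+1.
  by rewrite /e /L exprS; ring.
have EL : step_err M h <= step_err M h * L ^+ l.+1.
  by rewrite ler_peMr // exprn_ege1.
rewrite -natr1; lra.
Qed.

Lemma solution_ge0 t i : t0 <= t -> 0 <= u t i.
Proof.
move=> ht; have D0 : 0 <= t - t0 by rewrite subr_ge0.
have [M [M0 hM]] := solution_bounded ht.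
pose E := m%:R * K * (m%:R * (K * M)) * (t - t0) ^+ 2.
pose B := E * expR (m%:R * K * (t - t0)).
have E0 : 0 <= E by rewrite !mulr_ge0 // exprn_ge0.
have B0 : 0 <= B by rewrite mulr_ge0 // expR_ge0.
apply: (@le_of_le_subr_divn _ B _ _ (Num.Def.archi_bound (K * (t - t0))) B0).
move=> n nN n0; have np : 0 < n%:R :> R by rewrite ltr0n.
set h := (t - t0) / n%:R.
have h0 : 0 <= h by rewrite divr_ge0 // ltW.
have hn : t0 + n%:R * h = t by rewrite /h mulrC divfK ?gt_eqF // addrC subrK.
have Kh : K * h <= 1.
  have : K * (t - t0) <= n%:R.
    by rewrite (le_trans (ltW (archi_boundP _))) ?ler_nat // mulr_ge0.
  by rewrite /h mulrA ler_pdivrMr // mul1r.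
have hnt : t0 + n%:R * h <= t by rewrite hn.
have := solution_grid_geN hM M0 h0 Kh hnt (leqnn n) i; rewrite hn.
have nE : n%:R * step_err M h = E / n%:R.
  by rewrite /step_err /E /h; field; rewrite gt_eqF.
have Ln : (1 + m%:R * K * h) ^+ n <= expR (m%:R * K * (t - t0)).
  have -> : m%:R * K * (t - t0) = n%:R * (m%:R * K * h).
    by rewrite /h; field; rewrite gt_eqF.
  rewrite expRM_natl lerXn2r ?nnegrE ?expR_ge0 ?expR_ge1Dx //.
  by rewrite addr_ge0 // !mulr_ge0.
have : n%:R * step_err M h * (1 + m%:R * K * h) ^+ n <= B / n%:R.
  have -> : B / n%:R = E / n%:R * expR (m%:R * K * (t - t0)) by rewrite /B mulrAC.
  by rewrite nE ler_wpM2l // divr_ge0 // ltW.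
lra.
Qed.

Lemma solution_grid_lower (M s h c : R) (n : nat) i j :
  (forall s' k, t0 <= s' -> s' <= s + n%:R * h -> `|u s' k| <= M) -> 0 <= M ->
  t0 <= s -> 0 <= h -> K * h <= 1 -> 0 <= c -> c = 0 \/ j != i ->
  (forall tau, s <= tau -> tau <= s + n%:R * h -> c <= u tau j) ->
  forall l, (l <= n)%N ->
    (1 - K * h) ^+ l * (u s i + c * \int[mu]_(x in `[s, s + l%:R * h]) a x i j)
      - l%:R * step_err M h <= u (s + l%:R * h) i.
Proof.
move=> hM M0 hs h0 Kh c0 hc cu; set w := 1 - K * h.
have w0 : 0 <= w by rewrite subr_ge0.
have w1 : w <= 1 by rewrite lerBlDr lerDl mulr_ge0.
have E0 : 0 <= step_err M h by rewrite /step_err !mulr_ge0.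
elim=> [_|l IH ln].
  by rewrite !mul0r addr0 Rintegral_itv_pt mulr0 addr0 expr0 mul1r subr0.
set tau := s + l%:R * h.
have t1 : s <= tau by rewrite lerDl mulr_ge0.
have t2 : tau + h <= s + n%:R * h by rewrite grid_stepS grid_le.
have t0tau := le_trans hs t1.
have x0 : forall k, k != i -> 0 <= coef_int tau h i k.
  by move=> k; rewrite eq_sym; exact: coef_int_ge0.
have xi : w <= 1 + coef_int tau h i i.
  by have /andP[+ _] := coef_int_bounds tau i i h0; rewrite /w; lra.
have cx : 0 <= c * coef_int tau h i j.
  by case: hc => [->|ji]; rewrite ?mul0r // mulr_ge0 // x0.
have th := ler_wpDr h0 (lexx tau).
have SL := metzler_row_step_ge (fun k => solution_ge0 k t0tau) x0 xi hc
  (cu tau t1 (le_trans th t2)).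
have O := euler_lower_step hM M0 i t0tau h0 t2.
have IH' : w ^+ l * (u s i + c * \int[mu]_(x in `[s, tau]) a x i j)
    - l%:R * step_err M h <= u tau i := IH (ltnW ln).
rewrite -grid_stepS -/tau (Rintegral_itv_split t1 th (integrable_coef i j _ _)).
rewrite -/(coef_int tau h i j).
have wl1 : w * w ^+ l <= 1 by rewrite -exprS exprn_ile1.
have h3 := ler_wpM2l w0 IH'.
have h4 : w * (l%:R * step_err M h) <= l%:R * step_err M h.
  by rewrite ler_piMl // mulr_ge0.
have h5 : w * w ^+ l * (c * coef_int tau h i j) <= c * coef_int tau h i j.
  by rewrite ler_piMl // mulr_ge0.
rewrite exprS -natr1; lra.
Qed.

Lemma solution_window_lower (s D c : R) (p : nat) i j :
  (0 < p)%N -> 2 * K * D <= p%:R -> t0 <= s -> 0 <= D -> 0 <= c ->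
  c = 0 \/ j != i -> (forall tau, s <= tau -> tau <= s + D -> c <= u tau j) ->
  (1 / 2) ^+ p * (u s i + c * \int[mu]_(x in `[s, s + D]) a x i j) <= u (s + D) i.
Proof.
(* On a grid of q p steps, Bernoulli gives (1 - K h)^q >= 1/2, so the damping over the
   window is at least 2^-p while the Euler error vanishes as q grows. *)
move=> p0 hKD hs D0 c0 hc cu; have sD : s <= s + D by rewrite lerDl.
have [M [M0 hM]] := solution_bounded (le_trans hs sD).
set Y := u s i + c * \int[mu]_(x in `[s, s + D]) a x i j.
have Y0 : 0 <= Y.
  rewrite addr_ge0 ?solution_ge0 //; case: hc => [->|ji]; first by rewrite mul0r.
  by rewrite mulr_ge0 // Rintegral_ge0 // => x _; rewrite a_offdiag_ge0 // eq_sym.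
have pp : 0 < p%:R :> R by rewrite ltr0n.
pose B := m%:R * K * (m%:R * (K * M)) * (D * D) / p%:R.
have B0 : 0 <= B by rewrite divr_ge0 ?mulr_ge0 // ltW.
apply: (@le_of_le_subr_divn _ B _ _ 1 B0) => q _ q0.
have qp : 0 < q%:R :> R by rewrite ltr0n.
have np : 0 < (q * p)%N%:R :> R by rewrite natrM mulr_gt0.
set h := D / (q * p)%N%:R.
have h0 : 0 <= h by rewrite divr_ge0 // ltW.
have hn : s + (q * p)%N%:R * h = s + D by rewrite /h mulrC divfK // gt_eqF.
have qKh : q%:R * (K * h) = K * D / p%:R.
  by rewrite /h natrM; field; rewrite !gt_eqF.
have KDp : K * D / p%:R <= 1 / 2 by rewrite ler_pdivrMr //; lra.
have Kh0 : 0 <= K * h by rewrite mulr_ge0.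
have Kh : K * h <= 1 / 2.
  by apply: le_trans KDp; rewrite -qKh ler_peMl // (ler_nat _ 1 q).
have := @solution_grid_lower M s h c (q * p)%N i j; rewrite hn.
move=> /(_ hM M0 hs h0 ltac:(lra) c0 hc cu _ (leqnn _)); rewrite hn -/Y.
have -> : (q * p)%N%:R * step_err M h = B / q%:R.
  by rewrite /step_err /B /h natrM; field; rewrite !gt_eqF.
have wq : 1 / 2 <= (1 - K * h) ^+ q.
  by have := bernoulli_ineq q Kh0 ltac:(lra); rewrite qKh; lra.
have wn : (1 / 2) ^+ p <= (1 - K * h) ^+ (q * p).
  by rewrite exprM lerXn2r // nnegrE // exprn_ge0 //; lra.
have := ler_wpM2r Y0 wn; lra.
Qed.

End MetzlerODE.

Lemma connect_exit_edge (T : finType) (e : rel T) (A : {set T}) r y :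
  connect e r y -> r \in A -> y \notin A ->
  exists x z, [/\ e x z, x \in A & z \notin A].
Proof.
move=> /connectP [q pth ->]; elim: q r pth => [|z q IH] r /=; first by move=> _ ->.
move=> /andP[erz pth] rA; case zA: (z \in A); first exact: IH pth zA.
by move=> _; exists r, z; rewrite zA.
Qed.

Lemma spreading_sets_cover (T : finType) (S : nat -> T -> {set T}) (e : nat -> rel T) :
  (forall r, r \in S 0%N r) -> (forall k r, S k r \subset S k.+1 r) ->
  (forall k, exists2 rt, (forall i, connect (e k) rt i) &
     (forall x y, e k x y -> x \in S k rt -> y \in S k.+1 rt)) ->
  forall n, (#|T| * #|T| <= n)%N -> exists r, forall i, i \in S n r.
Proof.
move=> S0 SS He; set N := (#|T| * #|T|)%N.
have mono r : {homo S^~ r : k l / (k <= l)%N >-> k \subset l}.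
  apply: homo_leq => [A|A B C h1 h2|k]; first exact: fintype.subxx.
    exact: fintype.subset_trans h1 h2.
  exact: SS.
have Sr k r : r \in S k r by apply: (fintype.subsetP (mono r _ _ (leq0n k))).
suff [r Sr_full] : exists r, forall i, i \in S N r.
  by move=> n Nn; exists r => i; apply: (fintype.subsetP (mono r _ _ Nn)).
case: (boolP [exists r, [forall i, i \in S N r]]) => [/existsP[r /forallP]|].
  by exists r.
rewrite negb_exists => /forallP notfull.
(* Phi k grows at every step before some S N r is full, but never exceeds N. *)
pose Phi k := (\sum_r #|S k r|)%N.
have grow k : (k < N)%N -> (Phi k < Phi k.+1)%N.
  move=> kN; have [rt conn edge] := He k.
  have [y yS] : exists y, y \notin S k rt.
    have /forallPn[y yN] := notfull rt; exists y; apply: contra yN.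
    exact: (fintype.subsetP (mono rt _ _ (ltnW kN))).
  have [x [z [exz xS zS]]] := connect_exit_edge (conn y) (Sr k rt) yS.
  have prop : S k rt \proper S k.+1 rt.
    by apply/fintype.properP; split; [exact: SS | exists z => //; exact: edge exz xS].
  rewrite /Phi (bigD1 rt) //= [X in (_ < X)%N](bigD1 rt) //= -addSn.
  rewrite leq_add ?proper_card //; apply: leq_sum => r _; exact: subset_leq_card.
have lowb k : (k <= N)%N -> (k + #|T| <= Phi k)%N.
  elim: k => [_|k IH kN]; last by have := grow k kN; have := IH (ltnW kN); lia.
  rewrite add0n /Phi -sum1_card; apply: leq_sum => r _.
  by rewrite card_gt0; apply/set0Pn; exists r.
have upb : (Phi N <= N)%N.
  rewrite /Phi /N -sum_nat_const; apply: leq_sum => r _; exact: max_card.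
have [rt _ _] := He 0%N; have T0 : (0 < #|T|)%N by apply/card_gt0P; exists rt.
by have := lowb N (leqnn N); lia.
Qed.

Lemma eta_ge_shared_column (R : realType) (m : nat) (V : 'M[R]_m) (x : R) :
  x <= 1 -> (forall i k, 0 <= V i k) ->
  (forall i j, exists k, x <= V i k /\ x <= V j k) -> x <= eta V.
Proof.
move=> x1 V0 Vx; rewrite /eta.
elim/big_ind: _ => // [y z hy hz|i _]; first by rewrite le_min hy hz.
elim/big_ind: _ => // [y z hy hz|j _]; first by rewrite le_min hy hz.
have [k [xi xj]] := Vx i j; rewrite (bigD1 k) //=.
rewrite ler_wpDr ?le_min ?xi ?xj //.
by rewrite sumr_ge0 // => l _; rewrite le_min !V0.
Qed.

Section Consensus.
Variables (R : realType) (m : nat) (L : R -> 'M[R]_m) (sigma M1 delta T : R).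
Variable V : R -> R -> 'M[R]_m.
Local Notation mu := (@lebesgue_measure R).

Hypothesis L_measurable : forall i j, measurable_fun setT (fun t => L t i j).
Hypothesis L_offdiag_ge0 : forall t i j, i != j -> 0 <= L t i j.
Hypothesis L_bounded : forall t i j, `|L t i j| <= M1.
Hypothesis M1_ge0 : 0 <= M1.
Hypothesis sigma_gt0 : 0 < sigma.
Hypothesis V_solves : solution_matrix sigma L V.
Hypothesis delta_gt0 : 0 < delta.
Hypothesis T_gt0 : 0 < T.
Hypothesis L_spanning : forall t1, 0 <= t1 ->
  has_spanning_tree (G_edge L t1 (t1 + T) delta).

Let a s i k := sigma * L s i k.
Let K := sigma * M1.
Let p := (Num.Def.archi_bound (2 * K * T)).+1.
Let decay := (1 / 2 : R) ^+ p.
Let spread := Num.min decay (decay * decay * sigma * delta).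
Let grid t0 (k : nat) := t0 + k%:R * T.

Lemma scaled_bound_ge0 : 0 <= K.
Proof. by rewrite mulr_ge0 // ltW. Qed.

Lemma scaled_measurable i k : measurable_fun setT (fun s => a s i k).
Proof. exact: measurable_funM. Qed.

Lemma scaled_offdiag_ge0 s i k : i != k -> 0 <= a s i k.
Proof. by move=> ik; rewrite mulr_ge0 ?L_offdiag_ge0 // ltW. Qed.

Lemma scaled_bounded s i k : `|a s i k| <= K.
Proof. by rewrite normrM gtr0_norm // ler_wpM2l // ltW. Qed.

Lemma decay_gt0 : 0 < decay.
Proof. by rewrite exprn_gt0. Qed.

Lemma spread_gt0 : 0 < spread.
Proof.
have d0 := decay_gt0.
by rewrite /spread lt_min d0 (mulr_gt0 (mulr_gt0 (mulr_gt0 d0 d0) sigma_gt0) delta_gt0).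
Qed.

Lemma spread_le1 : spread <= 1.
Proof. by rewrite /spread ge_min /decay exprn_ile1 //; lra. Qed.

Lemma V_start t0 i r : V t0 t0 i r = (i == r)%:R.
Proof. by have [_ ->] := V_solves (lexx t0) i r; rewrite Rintegral_itv_pt addr0. Qed.

Lemma column_solves t0 r t : t0 <= t -> forall i,
  mu.-integrable `[t0, t] (EFin \o (fun s => \sum_(k < m) a s i k * V s t0 k r)) /\
  V t t0 i r = V t0 t0 i r + \int[mu]_(s in `[t0, t]) \sum_(k < m) a s i k * V s t0 k r.
Proof.
move=> ht i; have [I E] := V_solves ht i r.
have fe : (fun s => sigma * \sum_(k < m) L s i k * V s t0 k r) =
          (fun s => \sum_(k < m) a s i k * V s t0 k r).
  by apply/funext => s; rewrite mulr_sumr; apply: eq_bigr => k _; rewrite mulrA.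
rewrite fe in E; split; first by rewrite -fe.
by rewrite E V_start.
Qed.

Lemma V_ge0 t0 t i r : t0 <= t -> 0 <= V t t0 i r.
Proof.
move=> ht; apply: (solution_ge0 scaled_measurable scaled_offdiag_ge0 scaled_bounded
  scaled_bound_ge0 (@column_solves t0 r)) => // k.
by rewrite V_start ler0n.
Qed.

Lemma V_window_lower t0 r (s D c : R) i j :
  t0 <= s -> 0 <= D -> D <= T -> 0 <= c -> c = 0 \/ j != i ->
  (forall tau, s <= tau -> tau <= s + D -> c <= V tau t0 j r) ->
  decay * (V s t0 i r + c * (sigma * \int[mu]_(x in `[s, s + D]) L x i j))
    <= V (s + D) t0 i r.
Proof.
move=> hs D0 DT c0 hc cu.
have K2 : 0 <= 2 * K by rewrite mulr_ge0 ?scaled_bound_ge0.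
have hKD : 2 * K * D <= p%:R.
  apply: (le_trans (ler_wpM2l K2 DT)); apply: ltW.
  apply: (lt_le_trans (archi_boundP (mulr_ge0 K2 (ltW T_gt0)))).
  by rewrite /p ler_nat leqnSn.
rewrite -RintegralZl //; last first.
  exact: integrable_itv_bounded _ _ (L_measurable i j) (fun t => L_bounded t i j).
apply: (solution_window_lower scaled_measurable scaled_offdiag_ge0 scaled_bounded
  scaled_bound_ge0 (@column_solves t0 r)) => //.
by move=> k; rewrite V_start ler0n.
Qed.

Lemma grid_ge t0 k : t0 <= grid t0 k.
Proof. by rewrite /grid lerDl mulr_ge0 // ltW. Qed.

Lemma grid_succ t0 k : grid t0 k.+1 = grid t0 k + T.
Proof. by rewrite /grid grid_stepS. Qed.

Lemma V_persist t0 r k i : spread ^+ k <= V (grid t0 k) t0 i r ->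
  spread ^+ k.+1 <= V (grid t0 k.+1) t0 i r.
Proof.
move=> h; have t0k := grid_ge t0 k.
have := @V_window_lower t0 r (grid t0 k) T 0 i i t0k (ltW T_gt0) (lexx T) (lexx 0)
  (or_introl erefl) (fun tau h1 _ => V_ge0 i r (le_trans t0k h1)).
rewrite mul0r addr0 grid_succ; apply: le_trans.
rewrite exprS ler_pM ?exprn_ge0 ?(ltW spread_gt0) //.
by rewrite /spread ge_min lexx.
Qed.

Lemma V_window_stays t0 r k x tau : spread ^+ k <= V (grid t0 k) t0 x r ->
  grid t0 k <= tau -> tau <= grid t0 k + T -> decay * spread ^+ k <= V tau t0 x r.
Proof.
move=> h h1 h2; have t0k := grid_ge t0 k.
have D0 : 0 <= tau - grid t0 k by rewrite subr_ge0.
have DT : tau - grid t0 k <= T by lra.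
have := @V_window_lower t0 r (grid t0 k) (tau - grid t0 k) 0 x x t0k D0 DT (lexx 0)
  (or_introl erefl) (fun tau' h1' _ => V_ge0 x r (le_trans t0k h1')).
rewrite mul0r addr0 addrC subrK; apply: le_trans.
by rewrite ler_wpM2l // ltW // decay_gt0.
Qed.

Lemma V_edge t0 r k x y : G_edge L (grid t0 k) (grid t0 k + T) delta x y ->
  spread ^+ k <= V (grid t0 k) t0 x r -> spread ^+ k.+1 <= V (grid t0 k.+1) t0 y r.
Proof.
move=> exy hx; have [<-|nxy] := eqVneq x y; first exact: V_persist.
have t0k := grid_ge t0 k.
have sk0 : 0 <= spread ^+ k by rewrite exprn_ge0 // ltW // spread_gt0.
have d0 := decay_gt0.
have := @V_window_lower t0 r (grid t0 k) T (decay * spread ^+ k) y x t0k (ltW T_gt0)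
  (lexx T) (mulr_ge0 (ltW d0) sk0) (or_intror nxy) (fun tau => V_window_stays hx).
rewrite grid_succ; apply: le_trans.
set I := \int[mu]_(s in `[grid t0 k, grid t0 k + T]) L s y x.
have F1 : spread * spread ^+ k <= decay * decay * sigma * delta * spread ^+ k.
  by rewrite ler_wpM2r // /spread ge_min lexx orbT.
have F2 : decay * decay * sigma * spread ^+ k * delta <=
    decay * decay * sigma * spread ^+ k * I.
  apply: ler_wpM2l; last exact: ltW exy.
  by rewrite (mulr_ge0 (mulr_ge0 (mulr_ge0 (ltW d0) (ltW d0)) (ltW sigma_gt0)) sk0).
have F3 : 0 <= decay * V (grid t0 k) t0 y r by rewrite mulr_ge0 ?V_ge0 // ltW.
rewrite exprS; lra.
Qed.

Lemma V_column_covers t0 n : 0 <= t0 -> (m * m <= n)%N ->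
  exists r, forall i, spread ^+ n <= V (grid t0 n) t0 i r.
Proof.
move=> t00 mn.
(* %SET: a finset, not the classical-set comprehension that is also in scope. *)
set S := fun k r => [set i | spread ^+ k <= V (grid t0 k) t0 i r]%SET.
have S0 r : r \in S 0%N r.
  by rewrite inE expr0 /grid mul0r addr0 V_start eqxx.
have SS k r : S k r \subset S k.+1 r.
  by apply/fintype.subsetP => i; rewrite !inE; exact: V_persist.
have He k : exists2 rt,
    (forall i, connect (G_edge L (grid t0 k) (grid t0 k + T) delta) rt i) &
    (forall x y, G_edge L (grid t0 k) (grid t0 k + T) delta x y ->
       x \in S k rt -> y \in S k.+1 rt).
  have [rt hrt] := L_spanning (le_trans t00 (grid_ge t0 k)).
  by exists rt => // x y exy; rewrite !inE; exact: V_edge.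
have mn' : (#|'I_m| * #|'I_m| <= n)%N by rewrite card_ord.
have [r Sr] := spreading_sets_cover S0 SS He mn'.
by exists r => i; have := Sr i; rewrite inE.
Qed.

Lemma eta_uniformly_positive : exists delta1 T1, 0 < delta1 /\ 0 < T1 /\
  forall t0, 0 <= t0 -> delta1 < eta (V (t0 + T1) t0).
Proof.
pose N := (m * m).+1; have sN0 : 0 < spread ^+ N by rewrite exprn_gt0 // spread_gt0.
exists (spread ^+ N / 2), (N%:R * T); split; first by rewrite divr_gt0.
split; first by rewrite mulr_gt0 // ltr0n.
move=> t0 t00; have [r hr] := V_column_covers t00 (leqnSn (m * m)).
apply: (@lt_le_trans _ _ (spread ^+ N)); first by rewrite ltr_pdivrMr // ltr_pMr //; lra.
apply: eta_ge_shared_column => [|i k|i j]; last by exists r.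
- by rewrite exprn_ile1 // ?spread_le1 // ltW // spread_gt0.
- exact: V_ge0 (grid_ge t0 N).
Qed.

End Consensus.

Theorem lemma9 (R : realType) (m : nat) (L : R -> 'M[R]_m) (sigma : R)
  (V : R -> R -> 'M[R]_m) :
  assumptionA4 L -> 0 < sigma -> solution_matrix sigma L V ->
  (exists delta T : R, 0 < delta /\ 0 < T /\
     forall t1 : R, 0 <= t1 -> has_spanning_tree (G_edge L t1 (t1 + T) delta)) ->
  exists delta1 T1 : R, 0 < delta1 /\ 0 < T1 /\
    forall t0 : R, 0 <= t0 -> delta1 < eta (V (t0 + T1) t0).
Proof.
move=> [L_meas [L_off [_ [M1 [M1_gt0 L_bdd]]]]] sigma_gt0 V_sol.
move=> [delta [T [delta_gt0 [T_gt0 L_span]]]].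
exact: (eta_uniformly_positive L_meas L_off L_bdd (ltW M1_gt0) sigma_gt0 V_sol
  delta_gt0 T_gt0 L_span).
Qed.
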